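(* Let $X$ be a second countable locally compact Hausdorff space equipped with a compatible proper metric $d$ (closed balls are compact), fix $o\in X$, and let $B_o(r)$ denote the closed ball of radius $r$ about $o$. Let $\mathcal{U}$ be a nonprincipal ultrafilter over $\mathbb{N}$, let $(f_n)_{n\in\mathbb{N}}$ be a norm-bounded sequence in $C_0(X)$, and let $f_{\mathcal{U}}(x):=\lim_{\mathcal{U}}f_n(x)$ for $x\in X$. The following are equivalent: (1) $(f_n)$ is $\mathcal{U}$-equicontinuous on bounded sets: for every $r,\varepsilon>0$ there is $\delta>0$ such that $\{n\in\mathbb{N}: \forall s,t\in B_o(r),\ d(s,t)<\delta\Rightarrow|f_n(s)-f_n(t)|<\varepsilon\}\in\mathcal{U}$; (2) $(f_n)$ is $\mathcal{U}$-strict convergent to $f_{\mathcal{U}}$: for every $g\in C_0(X)$ and every $\varepsilon>0$, $\{n\in\mathbb{N}:\|f_ng-f_{\mathcal{U}}g\|_\infty<\varepsilon\}\in\mathcal{U}$.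
   Context: $\lim_{\mathcal{U}}$ denotes the limit along the ultrafilter $\mathcal{U}$: $c=\lim_{\mathcal{U}}c_n$ iff for every $\varepsilon>0$, $\{n:|c_n-c|<\varepsilon\}\in\mathcal{U}$; every bounded sequence of complex numbers has a unique $\mathcal{U}$-limit. *)

From Stdlib Require Import Reals List.
Open Scope R_scope.

Definition Cx := (R * R)%type.
Definition Cmod (z : Cx) : R := sqrt (fst z ^ 2 + snd z ^ 2).
Definition Csub (z w : Cx) : Cx := (fst z - fst w, snd z - snd w).
Definition Cmul (z w : Cx) : Cx :=
  (fst z * fst w - snd z * snd w, fst z * snd w + snd z * fst w).

Record is_metric {X : Type} (d : X -> X -> R) : Prop := {
  met_nonneg : forall x y, 0 <= d x y;
  met_eq0 : forall x y, d x y = 0 <-> x = y;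
  met_sym : forall x y, d x y = d y x;
  met_tri : forall x y z, d x z <= d x y + d y z }.

Definition closed_ball {X : Type} (d : X -> X -> R) (o : X) (r : R) : X -> Prop :=
  fun x => d o x <= r.

Definition is_open {X : Type} (d : X -> X -> R) (A : X -> Prop) : Prop :=
  forall x, A x -> exists e, 0 < e /\ forall y, d x y < e -> A y.

Definition is_compact {X : Type} (d : X -> X -> R) (K : X -> Prop) : Prop :=
  forall (I : Type) (V : I -> X -> Prop),
    (forall i, is_open d (V i)) ->
    (forall x, K x -> exists i, V i x) ->
    exists l : list I, forall x, K x -> exists i, In i l /\ V i x.

Definition proper_metric {X : Type} (d : X -> X -> R) : Prop :=
  forall o r, is_compact d (closed_ball d o r).

Definition continuous_on {X : Type} (d : X -> X -> R) (f : X -> Cx) : Prop :=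
  forall x eps, 0 < eps -> exists delta, 0 < delta /\
    forall y, d x y < delta -> Cmod (Csub (f y) (f x)) < eps.

Definition C0 {X : Type} (d : X -> X -> R) (f : X -> Cx) : Prop :=
  continuous_on d f /\
  forall eps, 0 < eps -> exists K, is_compact d K /\
    forall x, ~ K x -> Cmod (f x) < eps.

Record is_ultrafilter (U : (nat -> Prop) -> Prop) : Prop := {
  uf_full : U (fun _ => True);
  uf_proper : ~ U (fun _ => False);
  uf_mono : forall A B : nat -> Prop, (forall n, A n -> B n) -> U A -> U B;
  uf_inter : forall A B, U A -> U B -> U (fun n => A n /\ B n);
  uf_ultra : forall A, U A \/ U (fun n => ~ A n) }.

Definition nonprincipal (U : (nat -> Prop) -> Prop) : Prop :=
  forall m : nat, ~ U (fun n => n = m).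

Definition is_Ulim (U : (nat -> Prop) -> Prop) (c : nat -> Cx) (l : Cx) : Prop :=
  forall eps, 0 < eps -> U (fun n => Cmod (Csub (c n) l) < eps).

Definition supnorm_lt {X : Type} (h : X -> Cx) (eps : R) : Prop :=
  exists c, c < eps /\ forall x, Cmod (h x) <= c.

From Stdlib Require Import Reals Lra Classical List.
From Coquelicot Require Complex.
Open Scope R_scope.

(* Both conditions are equivalent to U-uniform convergence of f_n to f_U on every
   closed ball B_o(r).  From equicontinuity: cover the compact ball by a finite
   delta-net, use the pointwise U-limits at the finitely many net points, and note
   that equicontinuity passes to f_U.  From uniform convergence on balls to strict
   convergence: g is small off a compact set, which lies in some ball, and the f_n
   are uniformly bounded.  Conversely, testing strict convergence against a
   continuous cut-off equal to 1 on B_o(r) gives uniform convergence on the ball,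
   and then every f_n in the U-large set is close to one fixed f_{n0}, which is
   uniformly continuous on the compact ball. *)

Add Ring Cx_ring : Complex.C_ring_theory.

Lemma Cmod_ge0 (z : Cx) : 0 <= Cmod z.
Proof. exact (Complex.Cmod_ge_0 z). Qed.

Lemma Cmod_Csub_triangle (a b c : Cx) :
  Cmod (Csub a c) <= Cmod (Csub a b) + Cmod (Csub b c).
Proof.
  change (Complex.Cmod (Complex.Cminus a c)
    <= Complex.Cmod (Complex.Cminus a b) + Complex.Cmod (Complex.Cminus b c)).
  replace (Complex.Cminus a c)
    with (Complex.Cplus (Complex.Cminus a b) (Complex.Cminus b c)) by ring.
  apply Complex.Cmod_triangle.
Qed.

Lemma Cmod_Csub_sym (a b : Cx) : Cmod (Csub a b) = Cmod (Csub b a).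
Proof.
  change (Complex.Cmod (Complex.Cminus a b) = Complex.Cmod (Complex.Cminus b a)).
  replace (Complex.Cminus a b) with (Complex.Copp (Complex.Cminus b a)) by ring.
  apply Complex.Cmod_opp.
Qed.

Lemma Cmod_Csub_le (a b : Cx) : Cmod (Csub a b) <= Cmod a + Cmod b.
Proof.
  change (Complex.Cmod (Complex.Cplus a (Complex.Copp b)) <= Complex.Cmod a + Complex.Cmod b).
  rewrite <- (Complex.Cmod_opp b). apply Complex.Cmod_triangle.
Qed.

Lemma Cmod_le_Csub (a b : Cx) : Cmod a <= Cmod (Csub a b) + Cmod b.
Proof.
  change (Complex.Cmod a <= Complex.Cmod (Complex.Cminus a b) + Complex.Cmod b).
  replace a with (Complex.Cplus (Complex.Cminus a b) b) at 1 by ring.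
  apply Complex.Cmod_triangle.
Qed.

Lemma Cmod_Csub_Cmulr (a b g : Cx) :
  Cmod (Csub (Cmul a g) (Cmul b g)) = Cmod (Csub a b) * Cmod g.
Proof.
  change (Complex.Cmod (Complex.Cminus (Complex.Cmult a g) (Complex.Cmult b g))
    = Complex.Cmod (Complex.Cminus a b) * Complex.Cmod g).
  rewrite <- Complex.Cmod_mult. f_equal. ring.
Qed.

Lemma Cmod_real (a : R) : Cmod (a, 0) = Rabs a.
Proof. exact (Complex.Cmod_R a). Qed.

Section Ultrafilter.
Variable U : (nat -> Prop) -> Prop.
Hypothesis HU : is_ultrafilter U.

Lemma U_nonempty (A : nat -> Prop) : U A -> exists n, A n.
Proof.
  intro HA. apply NNPP; intro Hnone. apply (uf_proper U HU).
  apply (uf_mono U HU A); [|exact HA].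
  intros n Hn; apply Hnone; eauto.
Qed.

Lemma U_forall_in_list {I : Type} (l : list I) (P : I -> nat -> Prop) :
  (forall i, In i l -> U (P i)) -> U (fun n => forall i, In i l -> P i n).
Proof.
  induction l as [|a l IH]; intro HP.
  - apply (uf_mono U HU (fun _ => True)); [intros n _ i []|apply (uf_full U HU)].
  - apply (uf_mono U HU (fun n => P a n /\ forall i, In i l -> P i n)).
    + intros n [Ha Hl] i [<-|Hi]; auto.
    + apply (uf_inter U HU); [apply HP; left; reflexivity|].
      apply IH; intros i Hi; apply HP; right; exact Hi.
Qed.

Lemma Ulim_Csub_le (a b : nat -> Cx) (la lb : Cx) (e : R) :
  U (fun n => Cmod (Csub (a n) (b n)) < e) -> is_Ulim U a la -> is_Ulim U b lb ->
  Cmod (Csub la lb) <= e.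
Proof.
  intros Hab Ha Hb. apply Rnot_lt_le; intro Hgt.
  set (eta := (Cmod (Csub la lb) - e) / 3).
  assert (Heta : 0 < eta) by (unfold eta; lra).
  destruct (U_nonempty _ (uf_inter U HU _ _ Hab (uf_inter U HU _ _ (Ha eta Heta) (Hb eta Heta))))
    as [n [H1 [H2 H3]]].
  pose proof (Cmod_Csub_triangle la (a n) lb).
  pose proof (Cmod_Csub_triangle (a n) (b n) lb).
  rewrite Cmod_Csub_sym in H2. unfold eta in *. lra.
Qed.

Lemma Ulim_Cmod_le (a : nat -> Cx) (l : Cx) (M : R) :
  (forall n, Cmod (a n) <= M) -> is_Ulim U a l -> Cmod l <= M.
Proof.
  intros HM Hl. apply Rnot_lt_le; intro Hgt.
  destruct (U_nonempty _ (Hl (Cmod l - M) ltac:(lra))) as [n Hn].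
  pose proof (Cmod_le_Csub l (a n)). pose proof (HM n).
  rewrite Cmod_Csub_sym in Hn. lra.
Qed.

End Ultrafilter.

Lemma list_upper_bound {I : Type} (l : list I) (phi : I -> R) :
  exists B, 0 < B /\ forall i, In i l -> phi i <= B.
Proof.
  induction l as [|a l [B [HB H]]].
  - exists 1; split; [lra|intros i []].
  - exists (Rmax B (phi a)); split.
    + apply Rlt_le_trans with B; [exact HB|apply Rmax_l].
    + intros i [<-|Hi]; [apply Rmax_r|].
      apply Rle_trans with B; [auto|apply Rmax_l].
Qed.

Lemma list_pos_lower_bound {I : Type} (l : list I) (phi : I -> R) :
  exists D, 0 < D /\ forall i, In i l -> 0 < phi i -> D <= phi i.
Proof.
  induction l as [|a l [D [HD H]]].
  - exists 1; split; [lra|intros i []].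
  - destruct (Rlt_dec 0 (phi a)) as [Ha|Ha].
    + exists (Rmin D (phi a)); split; [apply Rmin_glb_lt; auto|].
      intros i [<-|Hi] Hp; [apply Rmin_r|].
      apply Rle_trans with D; [apply Rmin_l|auto].
    + exists D; split; [exact HD|].
      intros i [<-|Hi] Hp; [lra|auto].
Qed.

Lemma clamp01_lipschitz (a b : R) :
  Rabs (Rmin 1 (Rmax 0 a) - Rmin 1 (Rmax 0 b)) <= Rabs (a - b).
Proof.
  unfold Rmin, Rmax.
  repeat destruct (Rle_dec _ _); unfold Rabs; repeat destruct (Rcase_abs _); lra.
Qed.

Section MetricSpace.
Variables (X : Type) (d : X -> X -> R).
Hypothesis Hd : is_metric d.

Lemma dist_refl (x : X) : d x x = 0.
Proof. exact (proj2 (met_eq0 d Hd x x) eq_refl). Qed.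

(* The side condition [P] lets the index of an open cover carry extra data. *)
Lemma guarded_ball_open (P : Prop) (x : X) (r : R) :
  is_open d (fun y => P /\ d x y < r).
Proof.
  intros y [HP Hy]. exists (r - d x y); split; [lra|].
  intros z Hz; split; [exact HP|].
  pose proof (met_tri d Hd x y z); lra.
Qed.

Lemma dist_lipschitz (o x y : X) : Rabs (d o y - d o x) <= d x y.
Proof.
  pose proof (met_tri d Hd o x y). pose proof (met_tri d Hd o y x).
  rewrite (met_sym d Hd y x) in *.
  unfold Rabs; destruct (Rcase_abs _); lra.
Qed.

Lemma lipschitz_continuous_on (phi : X -> R) :
  (forall x y, Rabs (phi y - phi x) <= d x y) -> continuous_on d (fun x => (phi x, 0)).
Proof.
  intros Hphi x e He. exists e; split; [exact He|].
  intros y Hy. unfold Csub; simpl.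
  replace (0 - 0) with 0 by ring. rewrite Cmod_real.
  pose proof (Hphi x y); lra.
Qed.

Lemma compact_continuous_bounded (K : X -> Prop) (h : X -> Cx) :
  is_compact d K -> continuous_on d h ->
  exists B, 0 < B /\ forall x, K x -> Cmod (h x) <= B.
Proof.
  intros HK Hh.
  destruct (HK X (fun x y => Cmod (h y) < Cmod (h x) + 1)) as [l Hl].
  - intros x y Hy.
    destruct (Hh y (Cmod (h x) + 1 - Cmod (h y))) as [de [Hde Hclose]]; [lra|].
    exists de; split; [exact Hde|]. intros z Hz.
    pose proof (Hclose z Hz). pose proof (Cmod_le_Csub (h z) (h y)). lra.
  - intros x _. exists x. lra.
  - destruct (list_upper_bound l (fun x => Cmod (h x) + 1)) as [B [HB HlB]].
    exists B; split; [exact HB|].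
    intros x Kx. destruct (Hl x Kx) as [i [Hi Hx]].
    pose proof (HlB i Hi); simpl in *; lra.
Qed.

Lemma compact_in_closed_ball (o : X) (K : X -> Prop) :
  is_compact d K -> exists r, 0 < r /\ forall x, K x -> closed_ball d o r x.
Proof.
  intro HK.
  destruct (compact_continuous_bounded K (fun x => (d o x, 0)) HK) as [r [Hr HKr]].
  - apply lipschitz_continuous_on, dist_lipschitz.
  - exists r; split; [exact Hr|].
    intros x Kx. specialize (HKr x Kx). rewrite Cmod_real in HKr.
    unfold closed_ball. pose proof (Rle_abs (d o x)); lra.
Qed.

Lemma compact_uniformly_continuous (K : X -> Prop) (h : X -> Cx) :
  is_compact d K -> continuous_on d h -> forall e, 0 < e ->
  exists delta, 0 < delta /\
    forall s t, K s -> d s t < delta -> Cmod (Csub (h s) (h t)) < e.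
Proof.
  intros HK Hh e He.
  destruct (HK (X * R)%type (fun p y => (0 < snd p /\ forall z, d (fst p) z < snd p ->
       Cmod (Csub (h z) (h (fst p))) < e / 2) /\ d (fst p) y < snd p / 2)) as [l Hl].
  - intros [x r]; apply guarded_ball_open.
  - intros x _. destruct (Hh x (e / 2)) as [de [Hde Hclose]]; [lra|].
    exists (x, de); simpl. rewrite dist_refl. repeat split; auto; lra.
  - destruct (list_pos_lower_bound l (fun p => snd p / 2)) as [D [HD HlD]].
    exists D; split; [exact HD|].
    intros s t Ks Hst. destruct (Hl s Ks) as [[x r] [Hi [[Hr Hclose] Hs]]]; simpl in *.
    assert (D <= r / 2) by (apply (HlD _ Hi); simpl; lra).
    pose proof (met_tri d Hd x s t).
    pose proof (Hclose s ltac:(lra)). pose proof (Hclose t ltac:(lra)).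
    pose proof (Cmod_Csub_triangle (h s) (h x) (h t)).
    rewrite (Cmod_Csub_sym (h x) (h t)) in *. lra.
Qed.

Lemma compact_finite_net (K : X -> Prop) (delta : R) :
  is_compact d K -> 0 < delta ->
  exists l : list X, forall x, K x -> exists i, In i l /\ K i /\ d i x < delta.
Proof.
  intros HK Hdelta.
  destruct (HK X (fun i y => K i /\ d i y < delta)) as [l Hl].
  - intro i; apply guarded_ball_open.
  - intros x Kx. exists x. rewrite dist_refl. auto.
  - exists l. intros x Kx. destruct (Hl x Kx) as [i [Hi [Ki Hix]]]. eauto.
Qed.

Lemma C0_bounded (g : X -> Cx) : C0 d g -> exists G, 0 < G /\ forall x, Cmod (g x) <= G.
Proof.
  intros [Hg Hg0]. destruct (Hg0 1 ltac:(lra)) as [K [HK Hout]].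
  destruct (compact_continuous_bounded K g HK Hg) as [B [HB Hin]].
  exists (Rmax B 1); split; [apply Rlt_le_trans with 1; [lra|apply Rmax_r]|].
  intro x. destruct (classic (K x)) as [Kx|Kx].
  - pose proof (Hin x Kx); pose proof (Rmax_l B 1); lra.
  - pose proof (Hout x Kx); pose proof (Rmax_r B 1); lra.
Qed.

Definition bump (o : X) (r : R) (x : X) : Cx := (Rmin 1 (Rmax 0 (r + 1 - d o x)), 0).

Lemma bump_C0 (o : X) (r : R) : proper_metric d -> C0 d (bump o r).
Proof.
  intro Hproper. split.
  - apply lipschitz_continuous_on. intros x y.
    eapply Rle_trans; [apply clamp01_lipschitz|].
    pose proof (dist_lipschitz o x y).
    replace (r + 1 - d o y - (r + 1 - d o x)) with (- (d o y - d o x)) by ring.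
    rewrite Rabs_Ropp; exact H.
  - intros e He. exists (closed_ball d o (r + 1)); split; [apply Hproper|].
    intros x Hx. unfold closed_ball in Hx. unfold bump. rewrite Cmod_real.
    unfold Rmin, Rmax. repeat destruct (Rle_dec _ _); unfold Rabs;
      repeat destruct (Rcase_abs _); lra.
Qed.

Lemma bump_closed_ball (o : X) (r : R) (x : X) : closed_ball d o r x -> bump o r x = (1, 0).
Proof.
  unfold closed_ball, bump; intro Hx. f_equal.
  unfold Rmin, Rmax. repeat destruct (Rle_dec _ _); lra.
Qed.

End MetricSpace.

Section UltraStrictConvergence.
Variables (X : Type) (d : X -> X -> R) (o : X).
Hypotheses (Hd : is_metric d) (Hproper : proper_metric d).
Variable U : (nat -> Prop) -> Prop.
Hypothesis HU : is_ultrafilter U.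
Variables (f : nat -> X -> Cx) (fU : X -> Cx).

Definition U_equicontinuous_on_balls : Prop :=
  forall r eps, 0 < r -> 0 < eps -> exists delta, 0 < delta /\
    U (fun n => forall s t, closed_ball d o r s -> closed_ball d o r t ->
         d s t < delta -> Cmod (Csub (f n s) (f n t)) < eps).

Definition U_strict_convergent : Prop :=
  forall g, C0 d g -> forall eps, 0 < eps ->
    U (fun n => supnorm_lt (fun x => Csub (Cmul (f n x) (g x)) (Cmul (fU x) (g x))) eps).

Definition U_uniform_on_balls : Prop :=
  forall r eps, 0 < r -> 0 < eps ->
    U (fun n => forall x, closed_ball d o r x -> Cmod (Csub (f n x) (fU x)) < eps).

Lemma U_equicontinuous_uniform_on_balls :
  (forall x, is_Ulim U (fun n => f n x) (fU x)) ->
  U_equicontinuous_on_balls -> U_uniform_on_balls.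
Proof.
  intros HfU Heq r eps Hr Heps.
  set (e := eps / 3).
  destruct (Heq r e Hr ltac:(unfold e; lra)) as [delta [Hdelta Hequi]].
  destruct (compact_finite_net X d Hd _ delta (Hproper o r) Hdelta) as [l Hnet].
  assert (Hpts := U_forall_in_list U HU l (fun i n => Cmod (Csub (f n i) (fU i)) < e)
     (fun i _ => HfU i e ltac:(unfold e; lra))).
  refine (uf_mono U HU _ _ _ (uf_inter U HU _ _ Hequi Hpts)).
  intros n [Hn_equi Hn_pts] x Hx.
  destruct (Hnet x Hx) as [i [Hi [Bi Hix]]].
  assert (Hfn : Cmod (Csub (f n x) (f n i)) < e).
  { apply Hn_equi; auto. rewrite (met_sym d Hd); exact Hix. }
  (* equicontinuity passes to the U-limit *)
  assert (HfU_i : Cmod (Csub (fU i) (fU x)) <= e).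
  { apply (Ulim_Csub_le U HU (fun m => f m i) (fun m => f m x)); auto.
    refine (uf_mono U HU _ _ _ Hequi). intros m Hm; apply Hm; auto. }
  pose proof (Hn_pts i Hi).
  pose proof (Cmod_Csub_triangle (f n x) (f n i) (fU x)).
  pose proof (Cmod_Csub_triangle (f n i) (fU i) (fU x)).
  unfold e in *; lra.
Qed.

Lemma U_uniform_on_balls_strict :
  (exists M, forall n x, Cmod (f n x) <= M) ->
  (forall x, is_Ulim U (fun n => f n x) (fU x)) ->
  U_uniform_on_balls -> U_strict_convergent.
Proof.
  intros [M0 HM0] HfU Hunif g Hg eps Heps.
  set (M := Rmax M0 1).
  assert (HM : 0 < M) by (apply Rlt_le_trans with 1; [lra|apply Rmax_r]).
  assert (Hfn : forall n x, Cmod (f n x) <= M).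
  { intros n x; pose proof (HM0 n x); pose proof (Rmax_l M0 1); unfold M; lra. }
  assert (HfUM : forall x, Cmod (fU x) <= M).
  { intro x; exact (Ulim_Cmod_le U HU _ _ M (fun n => Hfn n x) (HfU x)). }
  destruct (C0_bounded _ _ _ Hg) as [G [HG Hgb]].
  destruct (proj2 Hg (eps / (4 * M)) ltac:(apply Rdiv_lt_0_compat; lra)) as [K [HK Hsmall]].
  destruct (compact_in_closed_ball X d Hd o K HK) as [r [Hr HKr]].
  refine (uf_mono U HU _ _ _ (Hunif r (eps / (2 * G)) Hr ltac:(apply Rdiv_lt_0_compat; lra))).
  intros n Hn. exists (eps / 2); split; [lra|].
  intro x. rewrite Cmod_Csub_Cmulr.
  destruct (classic (K x)) as [Kx|Kx].
  - apply Rle_trans with (eps / (2 * G) * G).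
    + apply Rmult_le_compat; auto using Cmod_ge0. left; apply Hn, HKr, Kx.
    + right; field; lra.
  - apply Rle_trans with (2 * M * (eps / (4 * M))).
    + apply Rmult_le_compat; auto using Cmod_ge0.
      * pose proof (Cmod_Csub_le (f n x) (fU x)); pose proof (Hfn n x); pose proof (HfUM x); lra.
      * left; apply Hsmall, Kx.
    + right; field; lra.
Qed.

Lemma U_strict_uniform_on_balls : U_strict_convergent -> U_uniform_on_balls.
Proof.
  intros Hstrict r eps Hr Heps.
  refine (uf_mono U HU _ _ _ (Hstrict (bump X d o r) (bump_C0 X d Hd o r Hproper) eps Heps)).
  intros n [c [Hc Hn]] x Hx. specialize (Hn x). simpl in Hn.
  rewrite bump_closed_ball in Hn by exact Hx.
  rewrite Cmod_Csub_Cmulr, Cmod_real, Rabs_R1, Rmult_1_r in Hn. lra.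
Qed.

Lemma U_uniform_on_balls_equicontinuous :
  (forall n, continuous_on d (f n)) -> U_uniform_on_balls -> U_equicontinuous_on_balls.
Proof.
  intros Hf Hunif r eps Hr Heps.
  pose proof (Hunif r (eps / 8) Hr ltac:(lra)) as Hclose.
  destruct (U_nonempty U HU _ Hclose) as [n0 Hn0].
  destruct (compact_uniformly_continuous X d Hd _ (f n0) (Hproper o r) (Hf n0) (eps / 2))
    as [delta [Hdelta Hucont]]; [lra|].
  exists delta; split; [exact Hdelta|].
  refine (uf_mono U HU _ _ _ Hclose). intros n Hn s t Hs Ht Hst.
  pose proof (Hn s Hs). pose proof (Hn t Ht). pose proof (Hn0 s Hs). pose proof (Hn0 t Ht).
  pose proof (Hucont s t Hs Hst).
  pose proof (Cmod_Csub_triangle (f n s) (fU s) (f n t)).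
  pose proof (Cmod_Csub_triangle (fU s) (f n0 s) (f n t)).
  pose proof (Cmod_Csub_triangle (f n0 s) (f n0 t) (f n t)).
  pose proof (Cmod_Csub_triangle (f n0 t) (fU t) (f n t)).
  rewrite (Cmod_Csub_sym (fU s) (f n0 s)), (Cmod_Csub_sym (fU t) (f n t)) in *.
  lra.
Qed.

End UltraStrictConvergence.

Theorem proposition3p2 (X : Type) (d : X -> X -> R) (o : X)
  (Hd : is_metric d) (Hproper : proper_metric d)
  (U : (nat -> Prop) -> Prop) (HU : is_ultrafilter U) (HUnp : nonprincipal U)
  (f : nat -> X -> Cx) (Hf : forall n, C0 d (f n))
  (Hbdd : exists M, forall n x, Cmod (f n x) <= M)
  (fU : X -> Cx) (HfU : forall x, is_Ulim U (fun n => f n x) (fU x)) :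
  (forall r eps, 0 < r -> 0 < eps -> exists delta, 0 < delta /\
     U (fun n => forall s t, closed_ball d o r s -> closed_ball d o r t ->
          d s t < delta -> Cmod (Csub (f n s) (f n t)) < eps))
  <->
  (forall g, C0 d g -> forall eps, 0 < eps ->
     U (fun n => supnorm_lt (fun x => Csub (Cmul (f n x) (g x)) (Cmul (fU x) (g x))) eps)).
Proof.
  split; intro H.
  - apply (U_uniform_on_balls_strict X d o Hd U HU f fU Hbdd HfU).
    exact (U_equicontinuous_uniform_on_balls X d o Hd Hproper U HU f fU HfU H).
  - apply (U_uniform_on_balls_equicontinuous X d o Hd Hproper U HU f fU (fun n => proj1 (Hf n))).
    exact (U_strict_uniform_on_balls X d o Hd Hproper U HU f fU H).
Qed.
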